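(* Let $\gamma$ be an Ehresmann connection on $M\times_NC$ whose $C$-component $\gamma_C$ is defined on $C$ (i.e. its components $\gamma^i_{jkl}$ are functions on $C$). Then the equations $\tilde\gamma_C=R^{\nabla^{(1)}}$ and $\mathrm{alt}_{12}\circ\gamma_C=\nabla^{(2)}\tau_N$ are locally equivalent to the equations $$\gamma^h_{str}-\gamma^h_{rts}=A^h_{rm}A^m_{st}-A^h_{sm}A^m_{rt},$$ $$\gamma^h_{rst}-\gamma^h_{srt}=A^h_{tm}(A^m_{rs}-A^m_{sr})+A^m_{ts}(A^h_{mr}-A^h_{rm})+A^m_{tr}(A^h_{sm}-A^h_{ms}),$$ for all indices $h,r,s,t$.
   Context: $N$ is a connected oriented $n$-manifold, $p_M\colon M\to N$ the bundle of pseudo-Riemannian metrics of a fixed signature, $p_C\colon C\to N$ the bundle of linear connections (fibre over $x$: values $\Gamma_x$ of linear connections at $x$), an affine bundle modelled on $\otimes^2T^*N\otimes TN$, so $V(p_C)\cong p_C^*(\otimes^2T^*N\otimes TN)$. Summation over repeated indices. A chart $(x^i)$ induces coordinates $(x^i,y_{ij})$ on $M$ and $(x^i,A^i_{jk})$ on $C$, $A^i_{jk}(\Gamma_x)=\Gamma^i_{jk}(x)$ (Christoffel symbols, $\nabla_{\partial_j}\partial_k=\Gamma^i_{jk}\partial_i$). An Ehresmann connection on $M\times_NC\to N$ is locally $\gamma=\sum_{i\le j}(dy_{ij}+\gamma_{ijk}dx^k)\otimes\partial/\partial y_{ij}+(dA^i_{jk}+\gamma^i_{jkl}dx^l)\otimes\partial/\partial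 A^i_{jk}$; its $C$-component is $\gamma_C=(dA^i_{jk}+\gamma^i_{jkl}dx^l)\otimes\partial/\partial A^i_{jk}$, viewed when defined on $C$ as a homomorphism $TC\to p_C^*(\otimes^2T^*N\otimes TN)$, $\gamma_C=(dA^i_{jk}+\gamma^i_{jkl}dx^l)\otimes dx^j\otimes dx^k\otimes\partial/\partial x^i$. The 2-form $\tilde\gamma_C$ on $C$ with values in $p_C^*(T^*N\otimes TN)$ is $\tilde\gamma_C(X,Y)=c^1_1((p_C)_*Y\otimes\gamma_C(X))-c^1_1((p_C)_*X\otimes\gamma_C(Y))$, where $c^1_1(X_1\otimes w_1\otimes w_2\otimes X_2)=w_1(X_1)\,w_2\otimes X_2$. For a tensorial vector bundle $E\to N$, the canonical covariant derivative $\nabla^E$ on $p_C^*E$ is determined by $((\nabla^E)_X(f\xi))(\Gamma_x)=(Xf)(\Gamma_x)\xi(x)+f(\Gamma_x)(\nabla^{\Gamma_x}_{(p_C)_*X}\xi)(x)$ for $X\in T_{\Gamma_x}C$, $f\in C^\infty(C)$, $\xi$ a local section of $E$, where $\nabla^{\Gamma_x}$ is the covariant derivative induced on $E$ by (any linear connection with value) $\Gamma_x$. $\nabla^{(1)}=\nabla^{E_1}$ with $E_1=TN$, $R^{\nabla^{(1)}}$ its curvature (a 2-form on $C$ with values in $p_C^*(T^*N\otimes TN)$), and $\nabla^{(2)}=\nabla^{E_2}$ with $E_2=\wedge^2T^*N\otimes TN$. $\tau_N$ is the section of $p_C^*(\wedge^2T^*N\otimes TN)$ given by $\tau_N(\Gamma_x)=$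 torsion of $\Gamma_x$; locally $\tau_N=\sum_{j<k}(A^i_{jk}-A^i_{kj})dx^j\wedge dx^k\otimes\partial/\partial x^i$. $\mathrm{alt}_{12}\colon\otimes^2T^*N\otimes TN\to\wedge^2T^*N\otimes TN$ alternates the two covariant arguments. *)

(* Local-coordinate model of the bundle
   of linear connections C -> N over a chart (x^i) of N. *)
From HB Require Import structures.
From mathcomp Require Import all_boot all_order all_algebra.
From mathcomp Require Import all_classical all_reals all_analysis.
Set Implicit Arguments. Unset Strict Implicit. Unset Printing Implicit Defensive.
Import Order.TTheory GRing.Theory Num.Theory.
Local Open Scope ring_scope.

Section Defs.
Variables (R : realType) (n : nat).

(* A point of C in the induced chart: coordinates (x^i, A^i_{jk}),
   with  (p.2 i j k) = A^i_{jk}(p).  A tangent vector to C has the same shape: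
   (v.1 l) = dx^l(v) (components of (p_C)_* v) and (v.2 i j k) = dA^i_{jk}(v). *)
Definition CPt := (('I_n -> R) * ('I_n -> 'I_n -> 'I_n -> R))%type.
Definition TV := CPt.

Definition shift (p : CPt) (v : TV) (t : R) : CPt :=
  (fun i => p.1 i + t * v.1 i, fun i j k => p.2 i j k + t * v.2 i j k).

Definition dirder (f : CPt -> R) (p : CPt) (v : TV) : R :=
  derive1 (fun t : R => f (shift p v t)) 0.

(* sections of p_C^* TN (components w.r.t. d/dx^i) *)
Definition sec1 := CPt -> 'I_n -> R.
Definition frame (k : 'I_n) : sec1 := fun _ i => (i == k)%:R.

(* canonical covariant derivative nabla^(1) along the constant vector field v:
   (nabla_v (s^k d_k))^i = v(s^i) + (p_* v)^j A^i_{jk} s^k *)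
Definition nabla1 (v : TV) (s : sec1) : sec1 := fun p i =>
  dirder (fun q => s q i) p v + \sum_(j < n) \sum_(k < n) v.1 j * p.2 i j k * s p k.

(* curvature R^{nabla^(1)}(v,w), an element of T^*N (x) TN with components
   curv p v w i k  (coefficient of dx^k (x) d/dx^i), computed on the constant
   (hence commuting) coordinate vector fields with values v, w *)
Definition curv1 (p : CPt) (v w : TV) (i k : 'I_n) : R :=
  nabla1 v (nabla1 w (frame k)) p i - nabla1 w (nabla1 v (frame k)) p i.

(* C-component of the Ehresmann connection, with components
   gam p i j k l = gamma^i_{jkl}(p) (functions on C) *)
Definition gamC (gam : CPt -> 'I_n -> 'I_n -> 'I_n -> 'I_n -> R)
  (p : CPt) (v : TV) (i j k : 'I_n) : R :=
  v.2 i j k + \sum_(l < n) gam p i j k l * v.1 l.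

(* tilde gamma_C (v,w): component of dx^k (x) d/dx^i *)
Definition tgamC gam (p : CPt) (v w : TV) (i k : 'I_n) : R :=
  \sum_(j < n) (w.1 j * gamC gam p v i j k - v.1 j * gamC gam p w i j k).

(* elements of wedge^2 T^*N (x) TN are represented by their (antisymmetric)
   arrays c i j k, the element being  sum_{j<k} c i j k dx^j /\ dx^k (x) d_i *)
Definition alt12 (B : 'I_n -> 'I_n -> 'I_n -> R) (i j k : 'I_n) : R :=
  B i j k - B i k j.

Definition tauN (p : CPt) (i j k : 'I_n) : R := p.2 i j k - p.2 i k j.

Definition nabla2 (v : TV) (T : CPt -> 'I_n -> 'I_n -> 'I_n -> R)
  (p : CPt) (i j k : 'I_n) : R :=
  dirder (fun q => T q i j k) p v +
  \sum_(l < n) v.1 l * \sum_(m < n)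
     (p.2 i l m * T p m j k - p.2 m l j * T p i m k - p.2 m l k * T p i j m).

End Defs.

From Pilot Require Import Defs.
From HB Require Import structures.
From mathcomp Require Import all_boot all_order all_algebra.
From mathcomp Require Import all_classical all_reals all_analysis.
From mathcomp Require Import ring.
Import Order.TTheory GRing.Theory Num.Theory.
Local Open Scope ring_scope.

(* In the chart, each side of the two equations is affine in the vertical
   components [v.2], [w.2] of the tangent vectors, with the same vertical part
   on both sides.  Their difference is therefore bilinear (curvature equation)
   resp. linear (torsion equation) in the horizontal components [v.1], [w.1],
   and its coefficients are exactly the differences of the two sides of the
   coordinate equations.  Such a form vanishes identically iff all its
   coefficients do, as one sees by evaluating it on coordinate vectors. *)

Section CoefficientTest.
Context {R : comPzRingType} {I : finType}.

Lemma sum_delta_mull (F : I -> R) (t : I) : \sum_l (l == t)%:R * F l = F t.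
Proof.
by under eq_bigr do rewrite mulr_natl mulrb; rewrite -big_mkcond big_pred1_eq.
Qed.

Lemma linear_form_eq0P (E : I -> R) :
  (forall v : I -> R, \sum_l v l * E l = 0) <-> (forall l, E l = 0).
Proof.
split=> [vE0 t | E0 v]; last by rewrite big1 // => l _; rewrite E0 mulr0.
by rewrite -(sum_delta_mull E t); apply: vE0.
Qed.

Lemma bilinear_form_eq0P (E : I -> I -> R) :
  (forall v w : I -> R, \sum_a \sum_b v a * w b * E a b = 0) <->
  (forall a b, E a b = 0).
Proof.
split=> [vwE0 a | E0 v w]; last first.
  by rewrite big1 // => a _; rewrite big1 // => b _; rewrite E0 mulr0.
apply/linear_form_eq0P => w; move: a.
apply/(linear_form_eq0P (fun a => \sum_b w b * E a b)) => v.
rewrite -[RHS](vwE0 v w); apply: eq_bigr => a _.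
by rewrite mulr_sumr; apply: eq_bigr => b _; rewrite mulrA.
Qed.

End CoefficientTest.

Lemma derive1_affine {R : realType} (a b x : R) :
  derive1 (fun t : R => a + t * b) x = b.
Proof.
have : is_derive x 1 (fun t : R => a + t * b) b.
  by apply: is_derive_eq; rewrite add0r mul1r scaler0 add0r; apply: mulr1.
by move=> ?; rewrite derive1E derive_val.
Qed.

Section ConnectionBundle.
Variables (R : realType) (n : nat).
Implicit Types (p : CPt R n) (v w : TV R n).

Lemma dirder_affine (f : CPt R n -> R) p v (b : R) :
  (forall t, f (Defs.shift p v t) = f p + t * b) -> dirder f p v = b.
Proof.
move=> f_affine; rewrite /dirder -(derive1_affine (f p) b 0).
by congr derive1; apply: boolp.funext.
Qed.

Lemma dirder_connection_form v w i k p :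
  dirder (fun q : CPt R n => \sum_j w.1 j * q.2 i j k) p v
  = \sum_j w.1 j * v.2 i j k.
Proof.
apply: dirder_affine => t /=.
by rewrite mulr_sumr -big_split; apply: eq_bigr => j _ /=; ring.
Qed.

Lemma nabla1_frame w k :
  nabla1 w (@frame R n k) = fun q i => \sum_j w.1 j * q.2 i j k.
Proof.
apply: boolp.funext => q; apply: boolp.funext => i.
rewrite /nabla1 (@dirder_affine _ q w 0) ?add0r => [|t]; last first.
  by rewrite mulr0 !addr0.
apply: eq_bigr => j _; rewrite (bigD1 k) //= /frame eqxx mulr1.
by rewrite big1 ?addr0 // => l /negbTE ->; rewrite mulr0.
Qed.

Lemma connection_form_square p v w i k :
  \sum_j \sum_m v.1 j * p.2 i j m * (\sum_l w.1 l * p.2 m l k)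
  = \sum_a \sum_b v.1 a * w.1 b * \sum_m p.2 i a m * p.2 m b k.
Proof.
apply: eq_bigr => a _; under eq_bigr do rewrite mulr_sumr.
rewrite exchange_big; apply: eq_bigr => b _.
by rewrite mulr_sumr; apply: eq_bigr => m _; ring.
Qed.

Lemma curv1E p v w i k :
  curv1 p v w i k =
  \sum_j w.1 j * v.2 i j k - \sum_j v.1 j * w.2 i j k
  + \sum_a \sum_b v.1 a * w.1 b *
      \sum_m (p.2 i a m * p.2 m b k - p.2 i b m * p.2 m a k).
Proof.
rewrite /curv1 !nabla1_frame /nabla1 !dirder_connection_form.
rewrite !connection_form_square [X in _ - (_ + X)]exchange_big /=.
rewrite opprD addrACA; congr (_ + _); rewrite -sumrB; apply: eq_bigr => a _.
by rewrite -sumrB; apply: eq_bigr => b _; rewrite sumrB; ring.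
Qed.

Variable gam : CPt R n -> 'I_n -> 'I_n -> 'I_n -> 'I_n -> R.

Lemma tgamCE p v w i k :
  tgamC gam p v w i k =
  \sum_j w.1 j * v.2 i j k - \sum_j v.1 j * w.2 i j k
  + \sum_a \sum_b v.1 a * w.1 b * (gam p i b k a - gam p i a k b).
Proof.
rewrite /tgamC /gamC.
under eq_bigr do rewrite !mulrDr opprD addrACA.
rewrite big_split /= sumrB; congr (_ + _).
transitivity (\sum_a \sum_b v.1 a * w.1 b * gam p i b k a
              - \sum_a \sum_b v.1 a * w.1 b * gam p i a k b); last first.
  rewrite -sumrB; apply: eq_bigr => a _.
  by rewrite -sumrB; apply: eq_bigr => b _; ring.
rewrite sumrB [X in _ = X - _]exchange_big; congr (_ - _).
  by apply: eq_bigr => b _; rewrite mulr_sumr; apply: eq_bigr => a _; ring.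
by apply: eq_bigr => a _; rewrite mulr_sumr; apply: eq_bigr => b _; ring.
Qed.

Definition curvature_defect p h r s t :=
  (gam p h s t r - gam p h r t s) -
  \sum_m (p.2 h r m * p.2 m s t - p.2 h s m * p.2 m r t).

Definition torsion_defect p h r s t :=
  (gam p h r s t - gam p h s r t) -
  \sum_m (p.2 h t m * (p.2 m r s - p.2 m s r)
          + p.2 m t s * (p.2 h m r - p.2 h r m)
          + p.2 m t r * (p.2 h s m - p.2 h m s)).

Lemma tgamC_sub_curv1 p v w h t :
  tgamC gam p v w h t - curv1 p v w h t =
  \sum_r \sum_s v.1 r * w.1 s * curvature_defect p h r s t.
Proof.
have -> : \sum_r \sum_s v.1 r * w.1 s * curvature_defect p h r s t =
  \sum_r \sum_s v.1 r * w.1 s * (gam p h s t r - gam p h r t s) -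
  \sum_r \sum_s v.1 r * w.1 s *
    \sum_m (p.2 h r m * p.2 m s t - p.2 h s m * p.2 m r t).
  rewrite -sumrB; apply: eq_bigr => r _.
  by rewrite -sumrB; apply: eq_bigr => s _; rewrite /curvature_defect; ring.
by rewrite tgamCE curv1E; ring.
Qed.

Lemma alt12_gamC_sub_nabla2_tauN p v h r s :
  alt12 (gamC gam p v) h r s - nabla2 v (@tauN R n) p h r s =
  \sum_t v.1 t * torsion_defect p h r s t.
Proof.
rewrite /alt12 /gamC /nabla2 (@dirder_affine _ p v (v.2 h r s - v.2 h s r))
  => [|t]; last by rewrite /tauN /=; ring.
have -> : \sum_t v.1 t * torsion_defect p h r s t =
  (\sum_t gam p h r s t * v.1 t - \sum_t gam p h s r t * v.1 t) -
  \sum_t v.1 t * \sum_m (p.2 h t m * tauN p m r s - p.2 m t r * tauN p h m s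
                          - p.2 m t s * tauN p h r m).
  rewrite -!sumrB; apply: eq_bigr => t _; rewrite /torsion_defect.
  rewrite (eq_bigr (fun m => p.2 h t m * tauN p m r s - p.2 m t r * tauN p h m s
                             - p.2 m t s * tauN p h r m)) => [|m _].
    by ring.
  by rewrite /tauN; ring.
by ring.
Qed.

Lemma tgamC_eq_curv1P p :
  (forall v w i k, tgamC gam p v w i k = curv1 p v w i k) <->
  (forall h r s t, curvature_defect p h r s t = 0).
Proof.
split=> [tgamC_curv1 h r s t | defect0 v w h t]; last first.
  apply/eqP; rewrite -subr_eq0 tgamC_sub_curv1; apply/eqP.
  exact: (bilinear_form_eq0P (fun r s => curvature_defect p h r s t)).2
    (fun r s => defect0 h r s t) v.1 w.1.
move: r s; apply/(bilinear_form_eq0P (fun r s => curvature_defect p h r s t)) => x y.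
pose v : TV R n := (x, fun _ _ _ => 0); pose w : TV R n := (y, fun _ _ _ => 0).
by rewrite -[LHS](tgamC_sub_curv1 p v w) tgamC_curv1 subrr.
Qed.

Lemma alt12_gamC_eq_nabla2_tauNP p :
  (forall v i j k, alt12 (gamC gam p v) i j k = nabla2 v (@tauN R n) p i j k) <->
  (forall h r s t, torsion_defect p h r s t = 0).
Proof.
split=> [alt12_nabla2 h r s | defect0 v h r s]; last first.
  apply/eqP; rewrite -subr_eq0 alt12_gamC_sub_nabla2_tauN; apply/eqP.
  exact: (linear_form_eq0P (torsion_defect p h r s)).2 (defect0 h r s) v.1.
apply/(linear_form_eq0P (torsion_defect p h r s)) => x.
pose v : TV R n := (x, fun _ _ _ => 0).
by rewrite -[LHS](alt12_gamC_sub_nabla2_tauN p v) alt12_nabla2 subrr.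
Qed.

End ConnectionBundle.

Theorem proposition4 (R : realType) (n : nat)
  (gam : CPt R n -> 'I_n -> 'I_n -> 'I_n -> 'I_n -> R) (p : CPt R n) :
  ((forall v w : TV R n, forall i k : 'I_n,
       tgamC gam p v w i k = curv1 p v w i k) /\
   (forall v : TV R n, forall i j k : 'I_n,
       alt12 (gamC gam p v) i j k = nabla2 v (@tauN R n) p i j k))
  <->
  ((forall h r s t : 'I_n,
       gam p h s t r - gam p h r t s =
       \sum_(m < n) (p.2 h r m * p.2 m s t - p.2 h s m * p.2 m r t)) /\
   (forall h r s t : 'I_n,
       gam p h r s t - gam p h s r t =
       \sum_(m < n) (p.2 h t m * (p.2 m r s - p.2 m s r)
                     + p.2 m t s * (p.2 h m r - p.2 h r m)
                     + p.2 m t r * (p.2 h s m - p.2 h m s)))).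
Proof.
rewrite tgamC_eq_curv1P alt12_gamC_eq_nabla2_tauNP.
split=> [[curv0 tors0] | [curv tors]]; split=> h r s t.
- by apply/eqP; rewrite -subr_eq0; apply/eqP/curv0.
- by apply/eqP; rewrite -subr_eq0; apply/eqP/tors0.
- by rewrite /curvature_defect curv subrr.
- by rewrite /torsion_defect tors subrr.
Qed.
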